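(* Let $y(t)$ solve $\dot y_k=v_k(Q(y))$, $k\in\mathcal{N}$, let $x(t)=Q(y(t))$, and let $p_k,p_k'\in\mathcal{X}_k$ with $p_k\preccurlyeq p_k'$. Then either $p_k$ becomes extinct along $x(t)$ (i.e. $\min\{x_{k\alpha}(t):\alpha\in\operatorname{supp}(p_k)\}\to0$), or every $\alpha_{-k}\in\mathcal{A}_{-k}\equiv\prod_{\ell\neq k}\mathcal{A}_\ell$ such that $u_k(p_k;\alpha_{-k})<u_k(p_k';\alpha_{-k})$ becomes extinct along $x(t)$ (i.e. $\prod_{\ell\ne k}x_{\ell,\alpha_\ell}(t)\to0$); the two alternatives are not mutually exclusive.
   Context: Setting: finite game with players $\mathcal{N}$, action sets $\mathcal{A}_k$, mixed strategies $\mathcal{X}_k=\Delta(\mathcal{A}_k)$, multilinear expected payoffs $u_k$, payoff vectors $v_k(x)=(u_k(\alpha;x_{-k}))_{\alpha\in\mathcal{A}_k}$. Each player has a penalty function $h_k$ on $\mathcal{X}_k$ (continuous, $C^\infty$ on relative interiors of faces, strongly convex: $h(tx_1+(1-t)x_2)\le th(x_1)+(1-t)h(x_2)-\tfrac12Kt(1-t)\|x_1-x_2\|^2$, $K>0$), with choice map $Q_k(y_k)=\arg\max_{x_k\in\mathcal{X}_k}\{\langle y_k,x_k\rangle-h_k(x_k)\}$; $Q=(Q_k)_k$. $p_k\preccurlyeq p_k'$ (weak domination) means $u_k(p_k;x_{-k})\le u_k(p_k';x_{-k})$ for all $x_{-k}\in\prod_{\ell\ne k}\mathcal{X}_\ell$,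 with strict inequality for some but not all $x_{-k}$. *)

From HB Require Import structures.
From mathcomp Require Import all_boot all_order all_algebra.
From mathcomp Require Import all_classical all_reals all_analysis.
Set Implicit Arguments. Unset Strict Implicit. Unset Printing Implicit Defensive.
Import Order.TTheory GRing.Theory Num.Theory.
Import numFieldNormedType.Exports.
Local Open Scope classical_set_scope.
Local Open Scope ring_scope.

(* A mixed strategy of player k
   is a row vector in 'rV[R]_(n k) (entry [x 0 a] = probability of a). *)

Section Game.
Variable R : realType.
Variable I : finType.
Variable n : I -> nat.

Definition pprofile := {dffun forall l : I, 'I_(n l)}.
Definition mprofile := forall l : I, 'rV[R]_(n l).

Definition simplex (m : nat) : set 'rV[R]_m :=
  [set x | (forall a, 0 <= x 0 a) /\ \sum_(a < m) x 0 a = 1].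

Definition dotv (m : nat) (y z : 'rV[R]_m) : R := \sum_(a < m) y 0 a * z 0 a.

(* u_k(p_k ; x_{-k}): multilinear expected payoff of player k when k plays
   p and the others play x_{-k} (the k-th component of x is ignored). *)
Definition udev (u : forall k : I, pprofile -> R) (k : I)
   (p : 'rV[R]_(n k)) (x : mprofile) : R :=
  \sum_(al : pprofile) p 0 (al k) * (\prod_(l | l != k) x l 0 (al l)) * u k al.

Definition upay (u : forall k : I, pprofile -> R) (k : I) (x : mprofile) : R :=
  udev u (x k) x.

Definition vertex (m : nat) (a : 'I_m) : 'rV[R]_m := \row_(b < m) (b == a)%:R.

Definition payvec (u : forall k : I, pprofile -> R) (k : I) (x : mprofile)
  : 'rV[R]_(n k) := \row_(a < n k) udev u (vertex a) x.

Definition pure (al : pprofile) : mprofile := fun l => vertex (al l).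

Definition wdominated (u : forall k : I, pprofile -> R) (k : I)
   (p p' : 'rV[R]_(n k)) : Prop :=
  [/\ (forall x : mprofile, (forall l, l != k -> simplex (x l)) ->
         udev u p x <= udev u p' x),
      (exists x : mprofile, (forall l, l != k -> simplex (x l)) /\
         udev u p x < udev u p' x)
    & ~ (forall x : mprofile, (forall l, l != k -> simplex (x l)) ->
         udev u p x < udev u p' x)].

(* x is a maximiser of <y, .> - h over the simplex, i.e. x \in Q(y) *)
Definition choice_of (m : nat) (h : 'rV[R]_m -> R) (y x : 'rV[R]_m) : Prop :=
  simplex x /\ forall z, simplex z -> dotv y z - h z <= dotv y x - h x.

Definition strongly_convex_on_simplex (m : nat) (h : 'rV[R]_m -> R) (K : R) :=
  forall x1 x2, simplex x1 -> simplex x2 -> forall t : R, 0 <= t <= 1 ->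
    h (t *: x1 + (1 - t) *: x2) <=
      t * h x1 + (1 - t) * h x2 - 2^-1 * K * t * (1 - t) * `|x1 - x2| ^+ 2.

Definition relint_face (m : nat) (S : {set 'I_m}) : set 'rV[R]_m :=
  [set x | simplex x /\ forall a, (x 0 a != 0) = (a \in S)].

Definition tangent_face (m : nat) (S : {set 'I_m}) (v : 'rV[R]_m) : Prop :=
  (forall a, a \notin S -> v 0 a = 0) /\ \sum_(a < m) v 0 a = 0.

Fixpoint iter_deriv (m : nat) (vs : seq 'rV[R]_m) (f : 'rV[R]_m -> R)
  : 'rV[R]_m -> R :=
  match vs with
  | [::] => f
  | v :: vs' => fun x => 'D_v (iter_deriv vs' f) x
  end.

Definition smooth_on_faces (m : nat) (h : 'rV[R]_m -> R) : Prop :=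
  forall (S : {set 'I_m}) (vs : seq 'rV[R]_m),
    (forall w, w \in vs -> tangent_face S w) ->
    {within relint_face S, continuous (iter_deriv vs h)} /\
    (forall x v, relint_face S x -> tangent_face S v ->
        derivable (iter_deriv vs h) x v).

Definition penalty (m : nat) (h : 'rV[R]_m -> R) : Prop :=
  [/\ {within simplex (m:=m), continuous h},
      smooth_on_faces h
    & exists2 K : R, 0 < K & strongly_convex_on_simplex h K].

End Game.

From HB Require Import structures.
From mathcomp Require Import all_boot all_order all_algebra.
From mathcomp Require Import all_classical all_reals all_analysis.
From mathcomp Require Import ring lra.
Import Order.TTheory GRing.Theory Num.Theory.
Import numFieldNormedType.Exports.
Local Open Scope classical_set_scope.
Local Open Scope ring_scope.

Set Implicit Arguments.
Unset Strict Implicit.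
Unset Printing Implicit Defensive.

(* Let D(t) = <y_k(t), p'_k - p_k>.  Its derivative u_k(p'_k - p_k; x(t)) is
   nonnegative by domination, so D is nondecreasing.  If mu(t) is the least
   weight x_k(t) puts on supp(p_k), then x_k + mu (p'_k - p_k) still lies in
   the simplex, and optimality of x_k = Q_k(y_k) gives mu(t) D(t) <= 2 sup|h_k|.
   Suppose some alpha_{-k} against which p'_k does strictly better is not
   extinct: its weight P(t) exceeds some e > 0 at arbitrarily late times.
   Strong convexity makes the choice maps Lipschitz, and payoffs are bounded,
   so P is Lipschitz; hence after each such time P stays above e/2 for a fixed
   duration, during which D gains a fixed amount.  So D -> +oo and mu -> 0. *)

Lemma sum_dffun_prod (R : comPzSemiRingType) (I : finType) (T_ : I -> finType)
    (F : forall i, T_ i -> R) :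
  \sum_(f : {dffun forall i, T_ i}) \prod_i F i (f i) =
  \prod_i \sum_(j : T_ i) F i j.
Proof.
pose P_ := fun i => [ffun j : T_ i => F i j].
transitivity (\sum_(t : fprod T_) \prod_(i in I) P_ i (t i)).
  rewrite (reindex (@dffun_of_fprod _ T_)); last first.
    exact/onW_bij/dffun_of_fprod_bij.
  by apply: eq_bigr => t _; apply: eq_bigr => i _; rewrite /P_ /dffun_of_fprod !ffunE.
rewrite (@big_fprod R 0 1 *%R +%R I T_ P_).
rewrite -(bigA_distr_big_dep (tagged_with T_) (fun i j => untag 0 (P_ i) j)).
apply: eq_bigr => i _; rewrite -(@big_tag R 0 +%R I T_ (fun i => P_ i) i).
by apply: eq_bigr => j _; rewrite /P_ ffunE.
Qed.

Lemma sumr_mul_delta (R : pzSemiRingType) (T : finType) (f : T -> R) (c : T) :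
  \sum_j f j * (c == j)%:R = f c.
Proof.
rewrite (bigD1 c) //= eqxx mulr1 big1 ?addr0 // => j /negbTE jc.
by rewrite eq_sym jc mulr0.
Qed.

Section RealFacts.
Variable R : realType.

Lemma prodr_in01 (T : finType) (P : pred T) (f : T -> R) :
  (forall i, 0 <= f i <= 1) -> 0 <= \prod_(i | P i) f i <= 1.
Proof.
move=> f01; elim/big_ind: _ => [|a b /andP[a0 a1] /andP[b0 b1]|i _]; last exact: f01.
  by rewrite ler01 lexx.
by apply/andP; split; nra.
Qed.

Lemma normr_prodrB_le (T : finType) (P : pred T) (f g : T -> R) :
  (forall i, 0 <= f i <= 1) -> (forall i, 0 <= g i <= 1) ->
  `|\prod_(i | P i) f i - \prod_(i | P i) g i| <= \sum_(i | P i) `|f i - g i|.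
Proof.
move=> f01 g01.
pose K (a b c : R) := [/\ 0 <= a <= 1, 0 <= b <= 1 & `|a - b| <= c].
suff [] : K (\prod_(i | P i) f i) (\prod_(i | P i) g i) (\sum_(i | P i) `|f i - g i|)
  by [].
apply: (big_rec3 K); first by split; rewrite ?ler01 ?lexx // subrr normr0.
move=> i a b c _ [/andP[a0 a1] /andP[b0 b1] abc].
have /andP[f0 f1] := f01 i; have /andP[g0 g1] := g01 i.
split; try (apply/andP; split; nra).
have -> : f i * a - g i * b = f i * (a - b) + (f i - g i) * b by ring.
apply: le_trans (ler_normD _ _) _.
rewrite addrC !normrM (ger0_norm f0) (ger0_norm b0); apply: lerD.
  by rewrite -[leRHS]mulr1 ler_wpM2l.
by apply: le_trans abc; rewrite -[leRHS]mul1r ler_wpM2r.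
Qed.

Lemma is_derive_entry m (M : R -> 'rV[R]_m) t dM a :
  is_derive t (1 : R) M dM -> is_derive t (1 : R) (fun s => M s 0 a) (dM 0 a).
Proof.
move=> dMt; have dM' : derivable M t 1 by case: dMt.
have da : derivable (fun s => M s 0 a) t 1 by move/derivable_mxP: dM'; apply.
have dv : 'D_1 M t = dM by exact: derive_val.
by apply: DeriveDef => //; rewrite -dv derive_mx // mxE.
Qed.

Lemma is_derive_dotv m (Y : R -> 'rV[R]_m) t dY (d : 'rV[R]_m) :
  is_derive t (1 : R) Y dY -> is_derive t (1 : R) (fun s => dotv (Y s) d) (dotv dY d).
Proof.
move=> dYt.
have -> : (fun s => dotv (Y s) d) = \sum_(a < m) (fun s => d 0 a *: Y s 0 a).
  by apply/funext => s; rewrite /dotv fct_sumE; apply: eq_bigr => a _; rewrite mulrC.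
have -> : dotv dY d = \sum_(a < m) d 0 a *: dY 0 a.
  by apply: eq_bigr => a _; rewrite mulrC.
by apply: is_derive_sum => a; apply: is_deriveZ; exact: is_derive_entry.
Qed.

Lemma MVT_pos (f df : R -> R) (a b : R) : 0 < a -> a <= b ->
  (forall t : R, 0 < t -> is_derive t (1 : R) f (df t)) ->
  exists2 c, a <= c <= b & f b - f a = df c * (b - a).
Proof.
move=> a0 ab df_f.
have [c cab ->] : exists2 c, c \in `[a, b]%R & f b - f a = df c * (b - a).
  apply: MVT_segment => //.
    by move=> t; rewrite in_itv /= => /andP[a_t _]; apply: df_f; exact: lt_trans a_t.
  apply: continuous_in_subspaceT => t; rewrite inE /= in_itv /= => /andP[a_t _].
  have [dft _] := df_f t (lt_le_trans a0 a_t).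
  exact/differentiable_continuous/derivable1_diffP.
by exists c; rewrite // -in_itv.
Qed.

Lemma derive_ge0_le (f df : R -> R) :
  (forall t : R, 0 < t -> is_derive t (1 : R) f (df t)) -> (forall t : R, 0 < t -> 0 <= df t) ->
  forall s t : R, 0 < s -> s <= t -> f s <= f t.
Proof.
move=> df_f df0 s t s0 st; have [c /andP[sc _] fts] := MVT_pos s0 st df_f.
by rewrite -subr_ge0 fts mulr_ge0 ?df0 ?subr_ge0 // (lt_le_trans s0 sc).
Qed.

(* The step [e / (2 (L + 1))] is short enough for the Lipschitz bound to keep
   [P >= e / 2] on the whole interval. *)
Lemma derive_increment_ge (f df P : R -> R) (g L e t0 : R) :
  (forall t : R, 0 < t -> is_derive t (1 : R) f (df t)) ->
  (forall t : R, 0 < t -> g * P t <= df t) -> 0 < g -> 0 <= L -> 0 < e ->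
  (forall s t : R, 0 < s -> s <= t -> `|P t - P s| <= L * (t - s)) ->
  0 < t0 -> e <= P t0 ->
  f t0 + e / 2 * g * (e / (2 * (L + 1))) <= f (t0 + e / (2 * (L + 1))).
Proof.
move=> df_f dfP g0 L0 e0 Plip t00 et0.
set del := e / (2 * (L + 1)).
have del0 : 0 < del by rewrite divr_gt0 // mulr_gt0 //; lra.
have Ldel : L * del <= e / 2.
  have : (L + 1) * del = e / 2 by rewrite /del; field; lra.
  by nra.
have [c /andP[t0c ct0] fdel] := MVT_pos t00 (ltW (ltr_pwDr del0 (lexx t0))) df_f.
have Pc : e / 2 <= P c.
  move: (Plip t0 c t00 t0c); rewrite ler_norml => /andP[+ _].
  have : L * (c - t0) <= L * del by apply: ler_wpM2l => //; lra.
  lra.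
have c0 : 0 < c by apply: lt_le_trans t0c.
have : e / 2 * g <= df c by apply: le_trans (dfP c c0); rewrite mulrC ler_wpM2l // ltW.
move: fdel; rewrite addrAC subrr add0r; nra.
Qed.

Lemma cvgy_of_frequent_growth (f df P : R -> R) (g L e : R) :
  (forall t : R, 0 < t -> is_derive t (1 : R) f (df t)) ->
  (forall t : R, 0 <= P t) -> (forall t : R, 0 < t -> g * P t <= df t) ->
  0 < g -> 0 <= L -> 0 < e ->
  (forall s t : R, 0 < s -> s <= t -> `|P t - P s| <= L * (t - s)) ->
  (forall T : R, exists2 t, T < t & e <= P t) ->
  f @ +oo --> +oo.
Proof.
move=> df_f P0 dfP g0 L0 e0 Plip freq.
have fmono := derive_ge0_le df_f (fun t t0 => le_trans (mulr_ge0 (ltW g0) (P0 t)) (dfP t t0)).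
set c0 := e / 2 * g * (e / (2 * (L + 1))).
have c00 : 0 < c0 by rewrite !mulr_gt0 ?invr_gt0 //; lra.
have unbounded N : exists2 T, 1 <= T & f 1 + N%:R * c0 <= f T.
  elim: N => [|N [T T1 fT]]; first by exists 1; rewrite ?mul0r ?addr0.
  have [t0 Tt0 et0] := freq T.
  have t00 : 0 < t0 by lra.
  have step : f t0 + c0 <= _ := derive_increment_ge df_f dfP g0 L0 e0 Plip t00 et0.
  have fTt0 := fmono T t0 ltac:(lra) (ltW Tt0).
  have del0 : 0 <= e / (2 * (L + 1)) by rewrite divr_ge0 ?mulr_ge0 //; lra.
  exists (t0 + e / (2 * (L + 1))); first lra.
  by rewrite -natr1 mulrDl mul1r; lra.
apply/cvgryPge => A.
have [N AN] : exists N : nat, (A - f 1) / c0 < N%:R.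
  exists (Num.bound `|(A - f 1) / c0|).
  by apply: le_lt_trans (ler_norm _) _; exact: archi_boundP.
have [T T1 fT] := unbounded N.
near=> t; apply: le_trans (fmono T t _ _); last 2 first.
- lra.
- by near: t; apply: nbhs_pinfty_ge; rewrite num_real.
rewrite ltr_pdivrMr // in AN; lra.
Unshelve. all: end_near.
Qed.

Lemma frequently_ge_of_not_cvg0 (P : R -> R) :
  (forall t : R, 0 <= P t) -> ~ (P @ +oo --> 0) ->
  exists2 e, 0 < e & forall T : R, exists2 t, T < t & e <= P t.
Proof.
move=> P0 notcvg; apply: contra_notP notcvg => nofreq.
apply/cvgrPdist_lt => e e0.
have /existsNP[T HT] : ~ (forall T : R, exists2 t, T < t & e <= P t)
  by move=> freq; apply: nofreq; exists e.
exists T; split; first exact: num_real.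
move=> t Tt; rewrite sub0r normrN ger0_norm // ltNge.
by apply/negP => et; apply: HT; exists t.
Qed.

Lemma cvg0_of_mul_le T (F : set_system T) {FF : Filter F} (f g : T -> R) (B : R) :
  f @ F --> +oo -> (forall t, 0 <= g t) -> (forall t, g t * f t <= B) -> g @ F --> 0.
Proof.
move=> /cvgryPge fy g0 gfB; apply/cvgrPdist_lt => e e0.
have Be : `|B| / e * e = `|B| by rewrite divfK // gt_eqF.
have Be0 : 0 <= `|B| / e by rewrite divr_ge0 // ltW.
near=> t; rewrite sub0r normrN ger0_norm //.
have ft : `|B| / e + 1 <= f t by near: t; exact: fy.
have ft0 : 0 < f t by lra.
rewrite -(ltr_pM2r ft0); apply: le_lt_trans (gfB t) _.
by apply: le_lt_trans (ler_norm B) _; nra.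
Unshelve. all: end_near.
Qed.

End RealFacts.

Section Simplex.
Variable R : realType.

Lemma vertexE m (a b : 'I_m) : vertex R a 0 b = (b == a)%:R.
Proof. by rewrite mxE. Qed.

Lemma vertex_simplex m (a : 'I_m) : simplex (vertex R a).
Proof.
split=> [b|]; first by rewrite vertexE ler0n.
under eq_bigr do rewrite vertexE.
by rewrite (bigD1 a) //= eqxx big1 ?addr0 // => b /negbTE ->.
Qed.

Lemma simplex_entry_in01 m (x : 'rV[R]_m) a : simplex x -> 0 <= x 0 a <= 1.
Proof.
by move=> [x0 x1]; rewrite x0 /= -x1 (bigD1 a) //= lerDl sumr_ge0.
Qed.

Lemma simplex_convex m (x1 x2 : 'rV[R]_m) (t : R) : 0 <= t <= 1 ->
  simplex x1 -> simplex x2 -> simplex (t *: x1 + (1 - t) *: x2).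
Proof.
move=> /andP[t0 t1] [x10 x11] [x20 x21]; split=> [a|].
  by rewrite !mxE; apply: addr_ge0; apply: mulr_ge0 => //; lra.
under eq_bigr do rewrite !mxE.
by rewrite big_split /= -!big_distrr /= x11 x21; ring.
Qed.

Lemma simplex_closed m : closed (simplex (R := R) (m := m)).
Proof.
have -> : simplex (R := R) (m := m) =
   (\bigcap_(a in [set: 'I_m]) ((fun M : 'rV[R]_m => M 0 a) @^-1` [set r | 0 <= r]))
   `&` ((fun M : 'rV[R]_m => \sum_a M 0 a) @^-1` [set r | r = 1]).
  by apply/seteqP; split=> x /= [x0 x1]; split=> // a; [move=> _|]; exact: x0.
apply: closedI.
  apply: closed_bigI => a _; apply: preimage_closed; last exact: closed_ge.
  by move=> M _; exact: coord_continuous.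
apply: preimage_closed; last exact: closed_eq.
have -> : (fun M : 'rV[R]_m => \sum_a M 0 a) = \sum_a (fun M : 'rV[R]_m => M 0 a).
  by apply/funext => M; rewrite fct_sumE.
move=> M _; elim/big_ind: _ => [|f g cf cg|a _].
- exact: cst_continuous.
- exact: continuousD.
- exact: coord_continuous.
Qed.

Lemma simplex_bounded m : bounded_set (simplex (R := R) (m := m)).
Proof.
exists 1; split; first by rewrite realE ler01.
move=> M M1 x sx; rewrite /Num.Def.normr /= mx_normrE.
apply: bigmax_le => [|[i j] _]; first exact: ltW (lt_trans ltr01 M1).
have /andP[x0 x1] := simplex_entry_in01 j sx.
by rewrite /= (ord1 i) ger0_norm //; lra.
Qed.

Lemma penalty_bounded m (h : 'rV[R]_m -> R) : penalty h ->
  exists B, forall z, simplex z -> `|h z| <= B.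
Proof.
move=> [hc _ _].
have : compact (h @` simplex (R := R) (m := m)).
  apply: continuous_compact => //.
  by apply: (@bounded_closed_compact R m _ (simplex_bounded m)); exact: simplex_closed.
move=> /compact_bounded[M [_ HM]].
by exists (M + 1) => z sz; apply: (HM (M + 1)); [rewrite ltrDl | exists z].
Qed.

Lemma dotv_comb m (y x1 x2 : 'rV[R]_m) (s t : R) :
  dotv y (s *: x1 + t *: x2) = s * dotv y x1 + t * dotv y x2.
Proof.
rewrite /dotv !big_distrr -big_split /=; apply: eq_bigr => a _.
by rewrite !mxE; ring.
Qed.

Lemma normr_entry_le m (M : 'rV[R]_m) a : `|M 0 a| <= `|M|.
Proof.
rewrite [leRHS]/Num.Def.normr /= mx_normrE.
exact: le_trans (le_bigmax _ _ (0, a)).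
Qed.

(* Comparing both choices with their midpoint, strong convexity yields
   K/2 |x1 - x2|^2 <= <y1 - y2, x1 - x2> <= m D |x1 - x2|. *)
Lemma choice_of_lipschitz m (h : 'rV[R]_m -> R) K (y1 y2 x1 x2 : 'rV[R]_m) (D : R) :
  0 < K -> strongly_convex_on_simplex h K ->
  choice_of h y1 x1 -> choice_of h y2 x2 ->
  (forall a, `|y1 0 a - y2 0 a| <= D) ->
  forall a, `|x1 0 a - x2 0 a| <= 2 * m%:R * D / K.
Proof.
move=> K0 sc [sx1 opt1] [sx2 opt2] y12 a.
set N := `|x1 - x2|.
have N0 : 0 <= N by exact: normr_ge0.
have half : 0 <= (2^-1 : R) <= 1 by apply/andP; split; lra.
have hmid := sc x1 x2 sx1 sx2 _ half.
have smid := simplex_convex half sx1 sx2.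
have := opt1 _ smid; have := opt2 _ smid; rewrite !dotv_comb => mid2 mid1.
have convex_gap : K / 2 * N ^+ 2 <= dotv y1 x1 - dotv y1 x2 - dotv y2 x1 + dotv y2 x2.
  by rewrite -/N in hmid; nra.
have dot_gap : dotv y1 x1 - dotv y1 x2 - dotv y2 x1 + dotv y2 x2 <= m%:R * D * N.
  have -> : dotv y1 x1 - dotv y1 x2 - dotv y2 x1 + dotv y2 x2 =
      \sum_b (y1 0 b - y2 0 b) * (x1 0 b - x2 0 b).
    by rewrite /dotv -!sumrB -big_split /=; apply: eq_bigr => b _; ring.
  have -> : m%:R * D * N = \sum_(b < m) D * N.
    by rewrite sumr_const card_ord -mulr_natl; ring.
  apply: ler_sum => b _; apply: le_trans (ler_norm _) _; rewrite normrM.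
  by apply: ler_pM => //; have := normr_entry_le (x1 - x2) b; rewrite !mxE.
have D0 : 0 <= D := le_trans (normr_ge0 _) (y12 a).
have := normr_entry_le (x1 - x2) a; rewrite !mxE -/N => xaN.
apply: le_trans xaN _; rewrite ler_pdivlMr //.
have [->|N0'] := eqVneq N 0; first by rewrite mul0r !mulr_ge0.
have Np : 0 < N by rewrite lt_def N0' N0.
nra.
Qed.

(* [x + mu (p' - p)] stays in the simplex, so the optimality of [x] bounds
   [mu <y, p' - p>] by the oscillation of [h]. *)
Lemma choice_of_shift_le m (h : 'rV[R]_m -> R) (B mu : R) (y x p p' : 'rV[R]_m) :
  (forall z, simplex z -> `|h z| <= B) -> choice_of h y x ->
  simplex p -> simplex p' -> 0 <= mu -> (forall a, p 0 a != 0 -> mu <= x 0 a) ->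
  mu * dotv y (p' - p) <= 2 * B.
Proof.
move=> hB [sx opt] sp sp' mu0 mu_le.
set z := 1 *: x + mu *: (p' - p).
have sz : simplex z.
  split=> [a|].
    rewrite /z !mxE; have /andP[pa0 pa1] := simplex_entry_in01 a sp.
    have := sp'.1 a; have := sx.1 a.
    by case: (eqVneq (p 0 a) 0) => [->|/mu_le]; nra.
  rewrite /z; under eq_bigr do rewrite !mxE mul1r.
  by rewrite big_split /= -big_distrr /= sumrB sx.2 sp.2 sp'.2 subrr mulr0 addr0.
have := opt z sz; rewrite /z dotv_comb.
have := hB z sz; have := hB x sx; rewrite !ler_norml => /andP[? ?] /andP[? ?].
lra.
Qed.

End Simplex.

Section Payoffs.
Variables (R : realType) (I : finType) (n : I -> nat) (u : forall k : I, pprofile n -> R).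

Lemma normr_payvec_le l (x : mprofile R n) a : (forall l a, 0 <= x l 0 a <= 1) ->
  `|payvec u l x 0 a| <= \sum_(al : pprofile n) `|u l al|.
Proof.
move=> x01; rewrite mxE /udev; apply: le_trans (ler_norm_sum _ _ _) _.
apply: ler_sum => al _; rewrite !normrM.
have va : `|vertex R a 0 (al l)| <= 1.
  by rewrite vertexE; case: eqP; rewrite ?normr1 ?normr0 ?ler01.
have wal : `|\prod_(l' | l' != l) x l' 0 (al l')| <= 1.
  by have /andP[w0 w1] := prodr_in01 (fun l' => l' != l) (fun l' => x01 l' (al l'));
     rewrite ger0_norm.
rewrite -[leRHS]mul1r ler_wpM2r // -[leRHS]mulr1; exact: ler_pM.
Qed.

Variable k : I.

Lemma udevB (p p' : 'rV[R]_(n k)) x : udev u (p' - p) x = udev u p' x - udev u p x.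
Proof. by rewrite /udev -sumrB; apply: eq_bigr => al _; rewrite !mxE; ring. Qed.

Lemma dotv_payvec (d : 'rV[R]_(n k)) x : dotv (payvec u k x) d = udev u d x.
Proof.
rewrite /dotv /payvec /udev; under eq_bigr do rewrite mxE /udev big_distrl /=.
rewrite exchange_big /=; apply: eq_bigr => al _; under eq_bigr do rewrite vertexE.
rewrite -(sumr_mul_delta (fun a => d 0 a * (\prod_(l | l != k) x l 0 (al l)) * u k al) (al k)).
by apply: eq_bigr => a _; rewrite eq_sym; ring.
Qed.

(* The k-th coordinate of a pure profile does not affect [udev u d], so it is
   pinned to that of [al0]. *)
Lemma udev_pure_expansion (d : 'rV[R]_(n k)) (x : mprofile R n) (al0 : pprofile n) :
  udev u d x = \sum_(al : pprofile n | al k == al0 k)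
                 (\prod_(l | l != k) x l 0 (al l)) * udev u d (pure R al).
Proof.
rewrite big_mkcond /=.
transitivity (\sum_(al : pprofile n) (al k == al0 k)%:R *
                (\prod_(l | l != k) x l 0 (al l)) * udev u d (pure R al)); last first.
  by apply: eq_bigr => al _; case: eqP; rewrite ?mul1r ?mul0r.
rewrite /udev; under [RHS]eq_bigr do rewrite big_distrr /=.
rewrite [RHS]exchange_big /=; apply: eq_bigr => al' _.
pose G l (j : 'I_(n l)) := if l == k then (j == al0 l)%:R else x l 0 j * (al' l == j)%:R.
have prodG (al : pprofile n) : \prod_l G l (al l) =
    (al k == al0 k)%:R * (\prod_(l | l != k) x l 0 (al l)) *
      \prod_(l | l != k) vertex R (al l) 0 (al' l).
  rewrite (bigD1 k) //= /G eqxx -mulrA; congr (_ * _).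
  by rewrite -big_split /=; apply: eq_bigr => l /negbTE ->; rewrite vertexE eq_sym.
transitivity (d 0 (al' k) * u k al' * \sum_(al : pprofile n) \prod_l G l (al l)).
  rewrite sum_dffun_prod [in RHS](bigD1 k) //= /G eqxx.
  rewrite (eq_bigr (fun j => 1 * (al0 k == j)%:R)); last by move=> j _; rewrite mul1r eq_sym.
  rewrite sumr_mul_delta mul1r.
  rewrite [X in _ = _ * X](eq_bigr (fun l => x l 0 (al' l))); first ring.
  by move=> l /negbTE ->; rewrite sumr_mul_delta.
by rewrite big_distrr /=; apply: eq_bigr => al _; rewrite prodG; ring.
Qed.

Lemma udev_ge_pure (d : 'rV[R]_(n k)) (x : mprofile R n) (al0 : pprofile n) :
  (forall l a, 0 <= x l 0 a) -> (forall al, 0 <= udev u d (pure R al)) ->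
  (\prod_(l | l != k) x l 0 (al0 l)) * udev u d (pure R al0) <= udev u d x.
Proof.
move=> x0 d0; rewrite (udev_pure_expansion d x al0) (bigD1 al0) //= lerDl.
by apply: sumr_ge0 => al _; rewrite mulr_ge0 ?prodr_ge0.
Qed.

End Payoffs.

Section Dynamics.
Variables (R : realType) (I : finType) (n : I -> nat) (u : forall k : I, pprofile n -> R).
Variables (h : forall k : I, 'rV[R]_(n k) -> R) (y x : R -> mprofile R n).
Hypothesis hpen : forall l, penalty (@h l).
Hypothesis hch : forall t l, choice_of (@h l) (y t l) (x t l).
Hypothesis hder : forall t : R, 0 < t -> forall l,
  is_derive t 1 (fun s => y s l) (payvec u l (x t)).

Lemma orbit_simplex t l : simplex (x t l).
Proof. by case: (hch t l). Qed.

Lemma orbit_in01 t l a : 0 <= x t l 0 a <= 1.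
Proof. exact/simplex_entry_in01/orbit_simplex. Qed.
Arguments orbit_in01 : clear implicits.

Lemma weight_ge0 k (al : pprofile n) t : 0 <= \prod_(l | l != k) x t l 0 (al l).
Proof. by apply: prodr_ge0 => l _; case/andP: (orbit_in01 t l (al l)). Qed.

Lemma orbit_lipschitz : exists2 L, 0 <= L & forall l a s t, 0 < s -> s <= t ->
  `|x t l 0 a - x s l 0 a| <= L * (t - s).
Proof.
have convex l : exists K, 0 < K /\ strongly_convex_on_simplex (@h l) K.
  by case: (hpen l) => _ _ [K K0 sc]; exists K.
have [K HK] := choice convex.
pose U l := \sum_(al : pprofile n) `|u l al|.
pose L l := 2 * (n l)%:R * U l / K l.
have L0 l : 0 <= L l.
  have [K0 _] := HK l; have U0 : 0 <= U l by apply: sumr_ge0.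
  by rewrite /L divr_ge0 ?mulr_ge0 // ltW.
exists (\sum_l L l); first exact: sumr_ge0.
move=> l a s t s0 st; have [K0 sc] := HK l.
apply: le_trans (_ : L l * (t - s) <= _); last first.
  by apply: ler_wpM2r; rewrite ?subr_ge0 // (bigD1 l) //= lerDl sumr_ge0.
have -> : L l * (t - s) = 2 * (n l)%:R * (U l * (t - s)) / K l by rewrite /L; field; lra.
apply: (choice_of_lipschitz K0 sc (hch t l) (hch s l)) => b.
have [c /andP[sc' _] ->] := MVT_pos s0 st (fun r r0 => is_derive_entry b (hder r0 l)).
rewrite normrM [`|t - s|]ger0_norm ?subr_ge0 //; apply: ler_wpM2r; rewrite ?subr_ge0 //.
exact/normr_payvec_le/orbit_in01.
Qed.

Lemma weight_lipschitz k (al : pprofile n) : exists2 L, 0 <= L &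
  forall s t : R, 0 < s -> s <= t ->
  `|\prod_(l | l != k) x t l 0 (al l) - \prod_(l | l != k) x s l 0 (al l)| <= L * (t - s).
Proof.
have [L L0 xlip] := orbit_lipschitz.
exists (#|I|%:R * L); first by rewrite mulr_ge0.
move=> s t s0 st.
apply: le_trans
  (normr_prodrB_le _ (fun l => orbit_in01 t l (al l)) (fun l => orbit_in01 s l (al l))) _.
apply: le_trans (_ : \sum_(l : I) L * (t - s) <= _); last first.
  by rewrite sumr_const -mulrA mulr_natl.
rewrite [leRHS](bigID (fun l => l != k)) /= -[leLHS]addr0.
by apply: lerD; [apply: ler_sum => l _; exact: xlip | rewrite sumr_ge0 // mulr_ge0 ?subr_ge0].
Qed.

Variables (k : I) (p p' : 'rV[R]_(n k)).
Hypotheses (sp : simplex p) (sp' : simplex p').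
Hypothesis dom : forall q : mprofile R n,
  (forall l, l != k -> simplex (q l)) -> udev u p q <= udev u p' q.

Lemma udev_gain_ge0 q : (forall l, l != k -> simplex (q l)) -> 0 <= udev u (p' - p) q.
Proof. by move=> sq; rewrite udevB subr_ge0 dom. Qed.

Lemma gain_ge_weight (al : pprofile n) t :
  (\prod_(l | l != k) x t l 0 (al l)) * udev u (p' - p) (pure R al) <= udev u (p' - p) (x t).
Proof.
apply: udev_ge_pure => [l a|q]; first by case/andP: (orbit_in01 t l a).
by apply: udev_gain_ge0 => l _; exact: vertex_simplex.
Qed.

Lemma dotv_gain_derive (t : R) : 0 < t ->
  is_derive t 1 (fun s => dotv (y s k) (p' - p)) (udev u (p' - p) (x t)).
Proof. by move=> t0; rewrite -dotv_payvec; exact: is_derive_dotv (hder t0 k). Qed.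

Lemma min_supp_ge0 (t : R) : 0 <= \big[Num.min/1]_(a < n k | p 0 a != 0) x t k 0 a.
Proof. by apply: le_bigmin => [|a _]; [exact: ler01 | case/andP: (orbit_in01 t k a)]. Qed.

Lemma min_supp_mul_gain_le : exists B, forall t,
  \big[Num.min/1]_(a < n k | p 0 a != 0) x t k 0 a * dotv (y t k) (p' - p) <= B.
Proof.
have [B hB] := penalty_bounded (hpen k).
exists (2 * B) => t; apply: choice_of_shift_le hB (hch t k) sp sp' (min_supp_ge0 t) _.
by move=> a pa; exact: bigmin_le_cond.
Qed.

End Dynamics.

Theorem proposition4p3 (R : realType) (I : finType) (n : I -> nat)
  (u : forall k : I, pprofile n -> R)
  (h : forall k : I, 'rV[R]_(n k) -> R)
  (y x : R -> mprofile R n)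
  (k : I) (p p' : 'rV[R]_(n k)) :
  (forall l : I, penalty (h l)) ->
  (forall t : R, forall l : I, choice_of (h l) (y t l) (x t l)) ->
  (forall t : R, 0 < t -> forall l : I,
      is_derive t 1 (fun s => y s l) (payvec u l (x t))) ->
  simplex p -> simplex p' ->
  wdominated u p p' ->
  ((fun t => \big[Num.min/1]_(a < n k | p 0 a != 0) x t k 0 a) @ +oo --> 0)
  \/
  (forall al : pprofile n,
     udev u p (pure R al) < udev u p' (pure R al) ->
     (fun t => \prod_(l | l != k) x t l 0 (al l)) @ +oo --> 0).
Proof.
move=> hpen hch hder sp sp' [dom _ _].
have [|/existsNP[al /not_implyP[better not_extinct]]] := pselect (forall al : pprofile n,
  udev u p (pure R al) < udev u p' (pure R al) ->
  (fun t => \prod_(l | l != k) x t l 0 (al l)) @ +oo --> 0); [by right | left].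
have weight0 := weight_ge0 hch k al.
have [e e0 freq] := frequently_ge_of_not_cvg0 weight0 not_extinct.
have [L L0 wlip] := weight_lipschitz hpen hch hder k al.
have [B muB] := min_supp_mul_gain_le hpen hch sp sp' (k := k).
apply: cvg0_of_mul_le (min_supp_ge0 hch p) muB.
have gain0 : 0 < udev u (p' - p) (pure R al) by rewrite udevB subr_gt0.
apply: (cvgy_of_frequent_growth (dotv_gain_derive hder p p') weight0 _ gain0 L0 e0 wlip freq).
by move=> t _; rewrite mulrC; exact: (gain_ge_weight hch dom al t).
Qed.
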